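(* Let $A$ (held by Alice) and $B$ (held by Bob) be strings over an alphabet $\Sigma$ known to both parties, and let $\epsilon>0$ be any constant. The \textsc{Lcp} problem, computing $\ell=\mathrm{LCP}(A,B)$, has a public-coin randomized protocol with either (1) $O(1)$ rounds and $O(|A|^\epsilon)$ communication, or (2) $O(\lg\lg\ell)$ rounds and $O(\ell^\epsilon)$ communication.
   Context: $\mathrm{LCP}(A,B)$ is the largest $\ell\ge0$ with $A[1..\ell]=B[1..\ell]$. In the public-coin randomized model the parties share an infinite string of independent unbiased random bits, and the output must be correct with probability at least a fixed constant greater than $1/2$. A round is one message; communication is the total number of bits sent. *)

From mathcomp Require Import all_boot.
From Stdlib Require Import Reals.

Set Implicit Arguments.
Unset Strict Implicit.
Unset Printing Implicit Defensive.

(* Longest common prefix, as in the paper: the largest l >= 0 such that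
   A[1..l] = B[1..l].  (Any such l is <= min(|A|,|B|).)                     *)
Definition lcp (Sigma : eqType) (A B : seq Sigma) : nat :=
  \max_(i < (minn (size A) (size B)).+1 | take i A == take i B) (i : nat).

(* Two-party public-coin protocols, in the standard protocol-tree model:
   the transcript is the sequence of bits sent so far; at each node the
   (public) randomness and the transcript determine whether the protocol
   has halted or who sends the next bit; the sender's bit depends on its
   own input, the public randomness and the transcript.  The output is
   determined by the public randomness and the final transcript (so both
   parties know it).  The public random string is r : nat -> bool.        *)
Record protocol (Sigma : Type) := Protocol {
  owner : (nat -> bool) -> seq bool -> option bool;
    (* None = halt, Some false = Alice speaks, Some true = Bob speaks *)
  bitA  : seq Sigma -> (nat -> bool) -> seq bool -> bool;
  bitB  : seq Sigma -> (nat -> bool) -> seq bool -> bool;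
  out   : (nat -> bool) -> seq bool -> nat
}.

Section Execution.
Variables (Sigma : Type) (P : protocol Sigma) (A B : seq Sigma) (r : nat -> bool).

Definition step (t : seq bool) : seq bool :=
  match owner P r t with
  | None => t
  | Some false => rcons t (bitA P A r t)
  | Some true => rcons t (bitB P B r t)
  end.

Definition trans (n : nat) : seq bool := iter n step [::].

(* the protocol halts after exactly n bits have been exchanged
   (so the communication is n) *)
Definition halts_at (n : nat) : Prop :=
  owner P r (trans n) = None /\ forall k, k < n -> owner P r (trans k) <> None.

Definition speakers (n : nat) : seq bool :=
  [seq odflt false (owner P r (trans k)) | k <- iota 0 n].

(* number of maximal blocks of consecutive bits sent by the same party,
   i.e. the number of messages (rounds) *)
Definition nblocks (s : seq bool) : nat :=
  if s is x :: s' then (count (fun b : bool => b) (pairmap (fun a b => a != b) x s')).+1 else 0.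

Definition rounds (n : nat) : nat := nblocks (speakers n).

Definition output (n : nat) : nat := out P r (trans n).

End Execution.

(* An event E that
   depends only on the first N bits has probability equal to the fraction
   of w in {0,1}^N for which it holds (extended by zeros).                 *)
Definition ext (N : nat) (w : {ffun 'I_N -> bool}) : nat -> bool :=
  fun i => if (insub i : option 'I_N) is Some j then w j else false.

Definition cylinder (N : nat) (E : (nat -> bool) -> Prop) : Prop :=
  forall r r', (forall i, i < N -> r i = r' i) -> (E r <-> E r').

Definition prob_ge_2_3 (E : (nat -> bool) -> Prop) : Prop :=
  exists N, cylinder N E /\
    exists S : seq {ffun 'I_N -> bool},
      [/\ uniq S, (forall w, w \in S -> E (ext w)) & (2 * 2 ^ N <= 3 * size S)%N].

Definition pow_bound (c eps : R) (m x : nat) : Prop :=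
  Rle (INR x) (Rmult c (Rpower (Rplus (INR m) 1) eps)).

Definition lglg_bound (c : R) (l x : nat) : Prop :=
  Rle (INR x) (Rmult c (Rplus 1 (ln (Rplus 1 (ln (Rplus 1 (INR l))))))).

(* Both protocols decide "c <= LCP(A, B)" by comparing random linear
   fingerprints of the length-c prefixes: each of the 2 lg c + 5 fingerprint
   bits of a string is the XOR of one public coin per position, selected by the
   letter at that position.  Two different strings of length c agree on all of
   them with probability 2^-(2 lg c + 5), so with probability at least 15/16
   no prefix length is fooled, and then every test is answered correctly.
   Given a bound L > LCP(A, B), a K-ary search with L <= K^h finds the LCP in
   h rounds of O(h K^2) bits each (Alice sends the tests of the K - 1
   candidates, Bob answers in unary how many pass).  The bound L is a tower
   3^3^i, at most the cube of m + 1 for the relevant m, so for the least K and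
   h >= 6/eps we get K^2 <= 4 (K-1)^2 <= 4 L^(2/h) <= 4 (m+1)^eps.  For (1),
   Alice announces in unary the least i with |A| < 3^3^i (one message); for (2)
   the parties test 3^3^i <= LCP(A, B) for i = 0, 1, ..., which stops after
   O(lg lg LCP) rounds having used O(3^i) = O(h K) bits. *)

From mathcomp Require Import all_boot.
From Stdlib Require Import Reals.
(* Re-imported so that ssrnat's [^] takes precedence over Reals' [Nat.pow]. *)
From mathcomp Require Import all_boot zify.
From Stdlib Require Import Lia Lra Psatz.

Set Implicit Arguments.
Unset Strict Implicit.
Unset Printing Implicit Defensive.

Section MessageProtocol.
Variables (Sigma St : Type) (init : St).
Variable next : St -> option (bool * nat).
Variable update : St -> seq bool -> St.
Variables msgA msgB : seq Sigma -> (nat -> bool) -> St -> nat -> bool.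
Variable result : St -> nat.

(* A state [s] with [next s = Some (b, n)] lets party [b] (false = Alice)
   send the [n.+1]-bit message whose bit [o] is [msgA/msgB _ r s o]; the
   protocol state is recovered from the transcript by [parse], which also
   returns the part of the current message already sent. *)
Definition parse_step (p : St * seq bool) (b : bool) : St * seq bool :=
  match next p.1 with
  | Some (_, n) => if size (rcons p.2 b) == n.+1 then (update p.1 (rcons p.2 b), [::])
                   else (p.1, rcons p.2 b)
  | None => (p.1, rcons p.2 b)
  end.

Definition parse (t : seq bool) := foldl parse_step (init, [::]) t.

Definition msg_owner (r : nat -> bool) (t : seq bool) : option bool :=
  if next (parse t).1 is Some (b, _) then Some b else None.

Definition msg_protocol : protocol Sigma := @Protocol Sigma
  msg_owner
  (fun A r t => msgA A r (parse t).1 (size (parse t).2))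
  (fun B r t => msgB B r (parse t).1 (size (parse t).2))
  (fun r t => result (parse t).1).

Section Run.
Variables (A B : seq Sigma) (r : nat -> bool).

Definition message (b : bool) s := if b then msgB B r s else msgA A r s.

Inductive runs : St -> nat -> seq bool -> St -> Prop :=
| runs_halt s : next s = None -> runs s 0 [::] s
| runs_send s b n bits sp f : next s = Some (b, n) ->
    runs (update s (mkseq (message b s) n.+1)) bits sp f ->
    runs s (n.+1 + bits) (nseq n.+1 b ++ sp) f.

Local Notation tr := (trans msg_protocol A B r).

Lemma trans_message m s b n : parse (tr m) = (s, [::]) -> next s = Some (b, n) ->
  forall k, k <= n.+1 ->
  [/\ tr (m + k) = tr m ++ take k (mkseq (message b s) n.+1),
      parse (tr (m + k)) = if k == n.+1 then (update s (mkseq (message b s) n.+1), [::])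
                           else (s, take k (mkseq (message b s) n.+1)) &
      k <= n -> msg_owner r (tr (m + k)) = Some b].
Proof.
move=> Hp Hn; set c := mkseq _ _.
have Hc : size c = n.+1 by rewrite size_mkseq.
elim=> [|k IH] Hk.
  by rewrite addn0 take0 cats0 /= Hp /msg_owner Hp /= Hn.
have [E1 E2 _] := IH (ltnW Hk).
rewrite ltn_eqF // in E2.
have Hsz1 : size (take k.+1 c) = k.+1 by rewrite size_takel // Hc.
have Htk : take k.+1 c = rcons (take k c) (nth false c k) by rewrite (take_nth false) // Hc.
have Hstep : tr (m + k.+1) = rcons (tr (m + k)) (nth false c k).
  rewrite addnS /= /step /= /msg_owner E2 /= Hn size_takel ?Hc ?(ltnW Hk) //.
  by rewrite /c nth_mkseq // /message; case: (b).
have Hparse : parse (tr (m + k.+1)) = parse_step (s, take k c) (nth false c k).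
  by rewrite Hstep /parse foldl_rcons -/(parse _) E2.
split.
- by rewrite Hstep E1 Htk rcons_cat.
- rewrite Hparse /parse_step /= Hn -Htk Hsz1.
  by case: eqP => [->|//]; rewrite -Hc take_size.
- move=> Hkn; rewrite /msg_owner Hparse /parse_step /= Hn -Htk Hsz1.
  by rewrite eqSS ltn_eqF //= Hn.
Qed.

Lemma runs_trans s bits sp f : runs s bits sp f -> forall m, parse (tr m) = (s, [::]) ->
  [/\ msg_owner r (tr (m + bits)) = None,
      (forall k, m <= k < m + bits -> msg_owner r (tr k) <> None),
      [seq odflt false (msg_owner r (tr k)) | k <- iota m bits] = sp &
      result (parse (tr (m + bits))).1 = result f].
Proof.
elim=> {s bits sp f} [s Hn|s b n bits sp f Hn _ IH] m Hp.
  by rewrite addn0 /msg_owner Hp /= Hn; split=> // k; lia.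
have [_ E2 _] := trans_message Hp Hn (leqnn n.+1).
rewrite eqxx in E2.
have [F1 F2 F3 F4] := IH _ E2.
have Howner k : m <= k < m + n.+1 -> msg_owner r (tr k) = Some b.
  move=> Hk; have Hkm : k - m <= n.+1 by lia.
  have [_ _ G3] := trans_message Hp Hn Hkm.
  by rewrite subnKC in G3; [apply: G3|]; lia.
rewrite addnA; split=> //.
- move=> k Hk; case: (ltnP k (m + n.+1)) => Hkn; first by rewrite Howner //; lia.
  by apply: F2; lia.
- rewrite iotaD map_cat F3; congr (_ ++ _).
  apply: (@eq_from_nth _ false); first by rewrite size_map size_iota size_nseq.
  move=> k; rewrite size_map size_iota => Hk.
  by rewrite (nth_map 0) ?size_iota // nth_iota // nth_nseq Hk Howner //; lia.
Qed.

Lemma runs_msg_protocol bits sp f : runs init bits sp f ->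
  [/\ halts_at msg_protocol A B r bits, rounds msg_protocol A B r bits = nblocks sp &
      output msg_protocol A B r bits = result f].
Proof.
move=> H; have [F1 F2 F3 F4] := runs_trans H (m := 0) erefl.
split; [split=> // k Hk; apply: F2; lia | by rewrite /rounds /speakers -F3 | exact: F4].
Qed.
End Run.

Lemma msg_protocol_eq_coins A B r r' :
  (forall s o, msgA A r s o = msgA A r' s o) -> (forall s o, msgB B r s o = msgB B r' s o) ->
  forall n,
  [/\ halts_at msg_protocol A B r n <-> halts_at msg_protocol A B r' n,
      rounds msg_protocol A B r n = rounds msg_protocol A B r' n &
      output msg_protocol A B r n = output msg_protocol A B r' n].
Proof.
move=> HA HB.
have E n : trans msg_protocol A B r n = trans msg_protocol A B r' n.
  by elim: n => //= n IH; rewrite IH /step /= /msg_owner HA HB.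
move=> n; rewrite /halts_at /rounds /speakers /output /= /msg_owner.
split; last by rewrite E.
- by split=> -[H1 H2]; split=> [|k /H2]; rewrite ?E // -?E.
- by congr nblocks; apply: eq_map => k; rewrite E.
Qed.
End MessageProtocol.

Lemma halts_at_unique (Sigma : Type) (P : protocol Sigma) A B r n n' :
  halts_at P A B r n -> halts_at P A B r n' -> n = n'.
Proof.
move=> [H1 H2] [H1' H2']; case: (ltngtP n n') => // H.
- by have := H2' _ H.
- by have := H2 _ H.
Qed.

Lemma nblocks_cons2 x y s : nblocks (x :: y :: s) = (x != y) + nblocks (y :: s).
Proof. by rewrite /nblocks /= addnS. Qed.

Lemma nblocks_cat s1 s2 : nblocks (s1 ++ s2) <= nblocks s1 + nblocks s2.
Proof.
case: s1 => [//|x s1]; elim: s1 x => [|y s1 IH] x.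
  case: s2 => [//|y s2].
  by rewrite cat1s nblocks_cons2 leq_add2r leq_b1.
by rewrite [_ ++ _]/= !nblocks_cons2 -addnA leq_add2l; apply: IH.
Qed.

Lemma nblocks_nseq n b : nblocks (nseq n b) <= 1.
Proof.
case: n => [//|n]; elim: n => [//|n IH].
by rewrite -[nseq _ _]/(b :: b :: nseq n b) nblocks_cons2 eqxx.
Qed.

Lemma nblocks_nseq2 m n b b' : nblocks (nseq m b ++ nseq n b') <= 2.
Proof. exact: leq_trans (nblocks_cat _ _) (leq_add (nblocks_nseq _ _) (nblocks_nseq _ _)). Qed.

Lemma nblocks_flatten ss : nblocks (flatten ss) <= sumn (map nblocks ss).
Proof.
elim: ss => [//|s ss IH] /=.
by apply: leq_trans (nblocks_cat _ _) _; rewrite leq_add2l.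
Qed.

Lemma nblocks_flatten_le2 (ss : seq (seq bool)) :
  all (fun s => nblocks s <= 2) ss -> nblocks (flatten ss) <= 2 * size ss.
Proof.
move=> Hss; apply: leq_trans (nblocks_flatten _) _.
by elim: ss Hss => //= s ss IH /andP[Hs /IH]; rewrite mulnS; apply: leq_add.
Qed.

Section LCP.
Variable Sigma : eqType.
Implicit Types A B : seq Sigma.

Lemma lcp_le_min A B : lcp A B <= minn (size A) (size B).
Proof. by apply/bigmax_leqP => i _; rewrite -ltnS. Qed.

Lemma lcp_le_sizel A B : lcp A B <= size A.
Proof. exact: leq_trans (lcp_le_min A B) (geq_minl _ _). Qed.

Lemma lcp_le_sizer A B : lcp A B <= size B.
Proof. exact: leq_trans (lcp_le_min A B) (geq_minr _ _). Qed.

Lemma take_lcp A B : take (lcp A B) A = take (lcp A B) B.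
Proof.
have H0 : (fun i : 'I_(minn (size A) (size B)).+1 => take i A == take i B) ord0.
  by rewrite /= !take0.
by rewrite /lcp (bigmax_eq_arg _ H0); case: arg_maxnP => // i /eqP.
Qed.

Lemma leq_lcp A B c : c <= minn (size A) (size B) ->
  (c <= lcp A B) = (take c A == take c B).
Proof.
move=> Hc; apply/idP/idP => [Hl|Ht].
  by rewrite -(take_takel A Hl) -(take_takel B Hl) take_lcp.
have Hc' : c < (minn (size A) (size B)).+1 by [].
exact: (leq_bigmax_cond (F := fun i : 'I__ => nat_of_ord i) (Ordinal Hc') Ht).
Qed.
End LCP.

Lemma seq_neq_split (T : eqType) (x y : seq T) : x != y -> size x = size y ->
  exists u a b x2 y2, [/\ x = u ++ a :: x2, y = u ++ b :: y2 & a != b].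
Proof.
elim: x y => [|a x IH] [|b y] //= Hne [Hs].
case: (eqVneq a b) Hne => [<- Hne|Hab _]; last by exists [::], a, b, x, y.
have Hxy : x != y by apply: contra Hne => /eqP ->.
have [u [a' [b' [x2 [y2 [-> -> Hab]]]]]] := IH y Hxy Hs.
by exists (a :: u), a', b', x2, y2.
Qed.

Lemma ext_ord N (w : {ffun 'I_N -> bool}) i (Hi : i < N) : ext w i = w (Ordinal Hi).
Proof. by rewrite /ext insubT /=; congr (w _); apply: val_inj. Qed.

Section Fingerprint.
Variable Sigma : finType.
Implicit Types (r : nat -> bool) (x y z u A B : seq Sigma).

Definition fp_width c := 2 * trunc_log 2 c + 5.

Definition coin_index c j q s := j + fp_width c * (s + #|Sigma| * q).

(* Bit [j] of the fingerprint of a length-[c] string whose suffix [x] starts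
   at position [q]: one coin per position, selected by the letter there. *)
Fixpoint fp_bit r c j q x : bool :=
  if x is a :: x' then r (coin_index c j q (enum_rank a)) (+) fp_bit r c j q.+1 x'
  else false.

(* Bits beyond [fp_width c] are padding: constantly false, reading no coin. *)
Definition fp r c j x := (j < fp_width c) && fp_bit r c j 0 x.

Definition fp_separates A B r :=
  all (fun c => (take c A == take c B) ||
      has (fun j => fp_bit r c j 0 (take c A) != fp_bit r c j 0 (take c B))
          (iota 0 (fp_width c)))
    (iota 1 (minn (size A) (size B))).

Lemma fp_width_gt0 c : 0 < fp_width c.
Proof. by rewrite /fp_width addn_gt0 orbT. Qed.

Lemma fp_width_le c : fp_width c <= 2 * c + 5.
Proof.
rewrite /fp_width leq_add2r leq_mul2l /=; case: (posnP c) => [->|Hc]; first by rewrite trunc_log0.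
exact: leq_trans (ltnW (ltn_expl _ (isT : 1 < 2))) (trunc_logP _ _).
Qed.

Lemma coin_index_lt c j q s : j < fp_width c -> s < #|Sigma| -> q < c ->
  coin_index c j q s < fp_width c * #|Sigma| * c.
Proof.
move=> Hj Hs Hq; rewrite /coin_index -mulnA.
apply: (@leq_trans (fp_width c * (s.+1 + #|Sigma| * q))).
  by rewrite mulnDr mulnS mulnDr ltn_add2r.
rewrite leq_mul2l; apply/orP; right; apply: (@leq_trans (#|Sigma| * q.+1)).
  by rewrite mulnS leq_add2r.
by rewrite leq_mul2l Hq orbT.
Qed.

Lemma coin_index_inj c j q s j' q' s' :
  j < fp_width c -> j' < fp_width c -> s < #|Sigma| -> s' < #|Sigma| ->
  coin_index c j q s = coin_index c j' q' s' -> [/\ j = j', q = q' & s = s'].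
Proof.
move=> Hj Hj' Hs Hs' E.
have [E1 E2] : j = j' /\ s + #|Sigma| * q = s' + #|Sigma| * q'.
  move: E; rewrite /coin_index ![j + _]addnC ![j' + _]addnC ![fp_width c * _]mulnC.
  move/(congr1 (fun n => (n %% fp_width c, n %/ fp_width c))) => [].
  by rewrite !modnMDl !modn_small // !divnMDl ?fp_width_gt0 // !divn_small // !addn0.
move: E2; rewrite ![_ + #|Sigma| * _]addnC ![#|Sigma| * _]mulnC.
move/(congr1 (fun n => (n %% #|Sigma|, n %/ #|Sigma|))) => [].
have HS : 0 < #|Sigma| by case: (posnP #|Sigma|) Hs => // ->.
by rewrite !modnMDl !modn_small // !divnMDl // !divn_small // !addn0.
Qed.

Lemma fp_bit_cat r c j q x y :
  fp_bit r c j q (x ++ y) = fp_bit r c j q x (+) fp_bit r c j (q + size x) y.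
Proof.
elim: x q => [|a x IH] q /=; first by rewrite addn0.
by rewrite IH addbA addnS.
Qed.

Lemma fp_bit_eq_coins r r' c j q x :
  (forall q' (a : Sigma), q <= q' < q + size x ->
     r (coin_index c j q' (enum_rank a)) = r' (coin_index c j q' (enum_rank a))) ->
  fp_bit r c j q x = fp_bit r' c j q x.
Proof.
elim: x q => [//|a x IH] q H /=.
rewrite H ?leqnn /= ?addnS ?ltnS ?leq_addr //; congr (_ (+) _).
by apply: IH => q' b Hq'; apply: H; rewrite /= addnS; lia.
Qed.

Section FlipCoins.
Variables (N c p : nat) (a : Sigma).
Hypothesis coins_enough : fp_width c * #|Sigma| * c <= N.

(* Flipping, for each [j] with [v j], the coin of bit [j] for letter [a] at
   position [p] toggles exactly those fingerprint bits of strings with [a]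
   at position [p]. *)
Definition flip_coins (v : {ffun 'I_(fp_width c) -> bool}) (w : {ffun 'I_N -> bool}) :
    {ffun 'I_N -> bool} :=
  [ffun i => w i (+) [exists j, v j && (val i == coin_index c j p (enum_rank a))]].

Lemma flip_coinsK v : involutive (flip_coins v).
Proof. by move=> w; apply/ffunP => i; rewrite !ffunE -addbA addbb addbF. Qed.

Lemma ext_flip_coins v w (j : 'I_(fp_width c)) q (s : 'I_#|Sigma|) : q < c ->
  ext (flip_coins v w) (coin_index c j q s)
  = ext w (coin_index c j q s) (+) [&& q == p, s == enum_rank a & v j].
Proof.
move=> Hq; have Hi := leq_trans (coin_index_lt (ltn_ord j) (ltn_ord s) Hq) coins_enough.
rewrite !(ext_ord _ Hi) ffunE; congr (_ (+) _); apply/existsP/idP => [[j' /andP[Hv /eqP E]]|].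
  have [/val_inj Ej -> /val_inj Es] := coin_index_inj (ltn_ord j) (ltn_ord j')
    (ltn_ord s) (ltn_ord _) E.
  by rewrite Ej Es !eqxx.
by case/and3P=> /eqP Eq /eqP Es Hv; exists j; rewrite Hv /= Eq Es.
Qed.

Lemma fp_bit_flip_coins_off v w (j : 'I_(fp_width c)) q z :
  p < q \/ q + size z <= p -> q + size z <= c ->
  fp_bit (ext (flip_coins v w)) c j q z = fp_bit (ext w) c j q z.
Proof.
move=> Hp Hz; apply: fp_bit_eq_coins => q' b Hq'.
have Hq'c : q' < c by lia.
have Hq'p : q' != p by apply/eqP; lia.
by rewrite (ext_flip_coins _ _ _ (enum_rank b) Hq'c) (negbTE Hq'p) addbF.
Qed.

Lemma fp_bit_flip_coins v w (j : 'I_(fp_width c)) u b z :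
  size u = p -> p + (size z).+1 <= c ->
  fp_bit (ext (flip_coins v w)) c j 0 (u ++ b :: z)
  = fp_bit (ext w) c j 0 (u ++ b :: z) (+) (b == a) && v j.
Proof.
move=> Hu Hz; rewrite !fp_bit_cat /= add0n Hu.
rewrite !fp_bit_flip_coins_off ?add0n ?Hu; try lia.
rewrite ext_flip_coins ?eqxx ?(inj_eq enum_rank_inj) /=; last lia.
by rewrite addbAC addbA.
Qed.
End FlipCoins.

Lemma card_fp_collision N c x y : x != y -> size x = c -> size y = c ->
  fp_width c * #|Sigma| * c <= N ->
  #|[set w : {ffun 'I_N -> bool} | all (fun j => fp_bit (ext w) c j 0 x == fp_bit (ext w) c j 0 y)
      (iota 0 (fp_width c))]| * 2 ^ fp_width c <= 2 ^ N.
Proof.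
move=> Hxy Hx Hy HN; set S := [set w | _].
have [u [a [b [x2 [y2 [Ex Ey Hab]]]]]] := seq_neq_split Hxy (etrans Hx (esym Hy)).
have Hx2 : size u + (size x2).+1 <= c by rewrite -Hx Ex size_cat.
have Hy2 : size u + (size y2).+1 <= c by rewrite -Hy Ey size_cat.
pose flip (wv : {ffun 'I_N -> bool} * {ffun 'I_(fp_width c) -> bool}) :=
  flip_coins (size u) a wv.2 wv.1.
have flip_fp w v (j : 'I_(fp_width c)) :
    fp_bit (ext (flip (w, v))) c j 0 x (+) fp_bit (ext (flip (w, v))) c j 0 y
    = fp_bit (ext w) c j 0 x (+) fp_bit (ext w) c j 0 y (+) v j.
  rewrite Ex Ey !(fp_bit_flip_coins a HN) // eqxx eq_sym (negbTE Hab).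
  by rewrite addbF addbAC.
have Hinj : {in setX S setT &, injective flip}.
  move=> [w1 v1] [w2 v2]; rewrite !in_setX !in_setT !andbT !inE /= => H1 H2 E.
  have Ev : v1 = v2.
    apply/ffunP => j; move: (congr1 (fun w => fp_bit (ext w) c j 0 x (+)
      fp_bit (ext w) c j 0 y) E) => /=.
    have Hj : val j \in iota 0 (fp_width c) by rewrite mem_iota add0n ltn_ord.
    by rewrite !flip_fp (eqP (allP H1 _ Hj)) (eqP (allP H2 _ Hj)) !addbb.
  move: E; rewrite /flip /= Ev => /(congr1 (flip_coins (size u) a v2)).
  by rewrite !flip_coinsK => ->.
have := card_in_imset Hinj; rewrite cardsX cardsT card_ffun card_bool card_ord => <-.
have -> : 2 ^ N = #|{ffun 'I_N -> bool}| by rewrite card_ffun card_bool card_ord.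
exact: max_card.
Qed.
End Fingerprint.

Lemma expn_Natpow m n : m ^ n = Nat.pow m n.
Proof. by elim: n => // n IH; rewrite expnS IH mulnE. Qed.

Lemma card_has_le_sum (I : Type) (T : finType) (P : I -> pred T) (s : seq I) :
  #|[set w | has (P^~ w) s]| <= \sum_(i <- s) #|[set w | P i w]|.
Proof.
elim: s => [|i s IH]; first by rewrite big_nil leqn0 cards_eq0; apply/eqP/setP => w; rewrite !inE.
rewrite big_cons (_ : [set w | _] = [set w | P i w] :|: [set w | has (P^~ w) s]).
  by apply: leq_trans (leq_card_setU _ _).1 _; rewrite leq_add2l.
by apply/setP => w; rewrite !inE.
Qed.

(* The [c] in [[2^k, 2^(k+1))] all have width [2k + 5], so together they
   contribute [2^(N-k-5)]. *)
Lemma geometric_fp_width N K : 2 * K + 5 <= N ->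
  \sum_(1 <= c < 2 ^ K) 2 ^ (N - fp_width c) + 2 ^ (N - K - 4) <= 2 ^ (N - 4).
Proof.
elim: K => [|K IH] HN; first by rewrite expn0 big_geq // subn0.
rewrite (@big_cat_nat _ _ _ (2 ^ K)) ?expn_gt0 ?leq_exp2l //=.
have -> : \sum_(2 ^ K <= c < 2 ^ K.+1) 2 ^ (N - fp_width c) = 2 ^ (N - K - 5).
  rewrite (@eq_big_nat _ _ _ _ _ _ (fun=> 2 ^ (N - (2 * K + 5)))); last first.
    by move=> c Hc; rewrite /fp_width (@trunc_log_eq 2 K c).
  rewrite sum_nat_const_nat expnS mul2n -addnn addnK -expnD; congr (2 ^ _); lia.
have E : 2 ^ (N - K - 4) = 2 ^ (N - K - 5) + 2 ^ (N - K - 5).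
  by rewrite addnn -mul2n -expnS; congr (2 ^ _); lia.
have := IH ltac:(lia); rewrite E (_ : N - K.+1 - 4 = N - K - 5); lia.
Qed.

Section Separation.
Variable Sigma : finType.
Implicit Types (r : nat -> bool) (x A B : seq Sigma).

Definition prefix_collision A B r c :=
  (take c A != take c B) &&
  all (fun j => fp_bit r c j 0 (take c A) == fp_bit r c j 0 (take c B)) (iota 0 (fp_width c)).

Lemma fp_separatesE A B r :
  fp_separates A B r = ~~ has (prefix_collision A B r) (iota 1 (minn (size A) (size B))).
Proof.
rewrite /fp_separates /prefix_collision -all_predC; apply: eq_all => c /=.
by rewrite negb_and negbK -has_predC.
Qed.

Lemma card_prefix_collision A B N c : c <= size A -> c <= size B -> 2 * c + 5 <= N ->
  (2 * c + 5) * #|Sigma| * c <= N ->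
  #|[set w : {ffun 'I_N -> bool} | prefix_collision A B (ext w) c]| <= 2 ^ (N - fp_width c).
Proof.
move=> HcA HcB HN1 HN2; have Hw := leq_trans (fp_width_le c) HN1.
rewrite -(@leq_pmul2r (2 ^ fp_width c)) ?expn_gt0 // -expnD subnK //.
case: (eqVneq (take c A) (take c B)) => [E|Hne].
  rewrite (_ : [set w | _] = set0) ?cards0 //.
  by apply/setP => w; rewrite !inE /prefix_collision E eqxx.
apply: leq_trans (card_fp_collision Hne (size_takel HcA) (size_takel HcB) _).
  rewrite leq_mul2r; apply/orP; right; apply/subset_leq_card/subsetP => w.
  by rewrite !inE /prefix_collision Hne.
by apply: leq_trans HN2; rewrite leq_mul // leq_mul // fp_width_le.
Qed.

Lemma sum_fp_width_le N M : 2 * M + 7 <= N ->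
  \sum_(c <- iota 1 M) 2 ^ (N - fp_width c) <= 2 ^ (N - 4).
Proof.
move=> HN; apply: leq_trans (geometric_fp_width (K := M.+1) _); last lia.
apply: leq_trans (leq_addr _ _).
rewrite (@big_cat_nat _ _ _ M.+1) //=; last exact: ltnW (ltn_expl _ (isT : 1 < 2)).
by rewrite /index_iota subn1 leq_addr.
Qed.

Lemma card_not_fp_separates A B N : let M := minn (size A) (size B) in
  2 * M + 7 <= N -> (2 * M + 5) * #|Sigma| * M <= N ->
  #|[set w : {ffun 'I_N -> bool} | ~~ fp_separates A B (ext w)]| * 16 <= 2 ^ N.
Proof.
move=> M HN1 HN2.
have [HMA HMB] : M <= size A /\ M <= size B by split; [exact: geq_minl | exact: geq_minr].
have -> : 2 ^ N = 2 ^ (N - 4) * 16 by rewrite -(expnD 2 _ 4) subnK //; lia.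
rewrite leq_mul2r /=; under eq_finset => w do rewrite fp_separatesE negbK.
apply: leq_trans (card_has_le_sum _ _) (leq_trans _ (sum_fp_width_le HN1)).
rewrite big_seq [X in _ <= X]big_seq; apply: leq_sum => c; rewrite mem_iota => Hc.
have HcM : c <= M by rewrite /M; lia.
apply: card_prefix_collision; try lia.
by apply: leq_trans HN2; rewrite !leq_mul // leq_add2r leq_mul2l HcM.
Qed.

(* Coins read by fingerprints of prefixes of strings of total length [n], plus
   the slack [2n + 7] needed by [card_not_fp_separates]. *)
Definition fp_coins n := (2 * n + 5) * #|Sigma| * n + 2 * n + 7.

Lemma leq_fp_coins m n : m <= n -> (2 * m + 5) * #|Sigma| * m <= fp_coins n.
Proof.
move=> Hmn; apply: leq_trans (leq_addr _ _); apply: leq_trans (leq_addr _ _).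
by rewrite leq_mul // leq_mul // leq_add2r leq_mul2l Hmn.
Qed.

Lemma fp_coins_leq m n : m <= n -> fp_coins m <= fp_coins n.
Proof.
move=> Hmn; have : (2 * m + 5) * #|Sigma| * m <= (2 * n + 5) * #|Sigma| * n.
  by rewrite leq_mul // leq_mul // leq_add2r leq_mul2l Hmn.
by rewrite /fp_coins; lia.
Qed.

Lemma fp_eq_coins r r' c j x : c <= size x ->
  (forall i, i < fp_coins (size x) -> r i = r' i) -> fp r c j (take c x) = fp r' c j (take c x).
Proof.
move=> Hc H; rewrite /fp; case Hj: (j < fp_width c) => //=.
apply: fp_bit_eq_coins => q a /andP[_ Hq]; apply: H.
rewrite add0n size_takel // in Hq.
apply: leq_trans (coin_index_lt Hj (ltn_ord _) Hq) _.
by apply: leq_trans (leq_fp_coins Hc); rewrite leq_mul // leq_mul // fp_width_le.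
Qed.

Lemma prob_fp_separates A B (E : (nat -> bool) -> Prop) :
  (forall r r', (forall i, i < fp_coins (size A + size B) -> r i = r' i) -> E r -> E r') ->
  (forall r, fp_separates A B r -> E r) -> prob_ge_2_3 E.
Proof.
set N := fp_coins _ => HE Hsep; exists N; split.
  by move=> r r' Hr; split; apply: HE => // i /Hr.
set S := [set w : {ffun 'I_N -> bool} | fp_separates A B (ext w)].
exists (enum S); split; first exact: enum_uniq.
  by move=> w; rewrite mem_enum inE; apply: Hsep.
have HM : minn (size A) (size B) <= size A + size B by rewrite geq_min leq_addr.
have HN : 2 * minn (size A) (size B) + 7 <= N by rewrite /N /fp_coins; lia.
have := card_not_fp_separates HN (leq_fp_coins HM).
rewrite (_ : [set w | _] = ~: S); last by apply/setP => w; rewrite !inE.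
have := cardsC S; rewrite card_ffun card_bool card_ord -cardE -expn_Natpow; lia.
Qed.
End Separation.

Lemma count_mkseq_ltn d n : count id (mkseq (fun o => o < d) n) = minn d n.
Proof.
elim: n => [|n IH]; first by rewrite minn0.
by rewrite mkseqS -cats1 count_cat IH /= addn0; case: (ltnP n d) => H; lia.
Qed.

Lemma count_iota_leq q n : count (fun d => d <= q) (iota 1 n) = minn q n.
Proof.
elim: n => [|n IH]; first by rewrite minn0.
by rewrite -[n.+1]addn1 iotaD count_cat IH /= addn0; case: (leqP (1 + n) q) => H; lia.
Qed.

Lemma divn_refine X K lo l : 0 < X -> lo <= l < lo + K * X ->
  lo + (l - lo) %/ X * X <= l < lo + (l - lo) %/ X * X + X /\
  lo + (l - lo) %/ X * X + X <= lo + K * X.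
Proof.
move=> HX /andP[H1 H2].
have Hq : ((l - lo) %/ X).+1 * X <= K * X by rewrite leq_mul2r ltn_divLR //; lia.
have := divn_eq (l - lo) X; have := ltn_pmod (l - lo) HX; move: Hq; rewrite mulSn.
by move: ((l - lo) %/ X) ((l - lo) %% X) => q rem; lia.
Qed.

Definition tower i := 3 ^ 3 ^ i.

Lemma ltn_tower i : i < tower i.
Proof.
apply: leq_trans (ltn_expl i (isT : 1 < 3)) _.
by rewrite leq_pexp2l // ltnW // ltn_expl.
Qed.

Lemma towerS i : tower i.+1 = tower i ^ 3.
Proof. by rewrite /tower expnS mulnC expnM. Qed.

Definition tower_index m := ex_minn (ex_intro (fun i => m < tower i) m (ltn_tower m)).

Lemma tower_indexP m :
  m < tower (tower_index m) /\ forall i, i < tower_index m -> tower i <= m.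
Proof.
rewrite /tower_index; case: ex_minnP => i Hi Hmin; split=> // j Hj.
by rewrite leqNgt; apply/negP => /Hmin; rewrite leqNgt Hj.
Qed.

Section LcpProtocols.
Variable Sigma : finType.
Implicit Types (r : nat -> bool) (A B : seq Sigma).

Variable dp : nat.
Definition depth := dp.+2.

Lemma arity_ex L : exists K, (2 <= K) && (L <= K ^ depth).
Proof.
exists L.+2; rewrite /= expnS.
by apply: leq_trans (leqnSn L) _; apply: leq_trans (leqnSn _) _; rewrite leq_pmulr // expn_gt0.
Qed.

Definition arity L := ex_minn (arity_ex L).

Lemma arityP L : 2 <= arity L /\ L <= arity L ^ depth.
Proof. by rewrite /arity; case: ex_minnP => K /andP[]. Qed.

Lemma arity_min L : 3 <= arity L -> (arity L).-1 ^ depth < L.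
Proof.
rewrite /arity; case: ex_minnP => K /andP[H1 H2] Hmin HK.
rewrite ltnNge; apply/negP => H.
by have := Hmin K.-1; rewrite H andbT; lia.
Qed.

Definition cand_width K := 2 * (K * depth) + 5.
Definition msgA_len K := K.-1 * (cand_width K).+1.
Definition msgB_len K := K.-1.
Definition candidate K lo s d := lo + d * K ^ s.

Lemma fp_width_le_cand_width c K : 2 <= K -> c <= K ^ depth -> fp_width c <= cand_width K.
Proof.
move=> HK Hc; rewrite /fp_width /cand_width leq_add2r leq_mul2l /=.
apply: leq_trans (leq_trunc_log 2 Hc) _.
have : K ^ depth <= 2 ^ (K * depth) by rewrite expnM leq_exp2r // ltnW // ltn_expl.
by move/(leq_trunc_log 2); rewrite trunc_expnK.
Qed.

(* [Scan i]: Alice reports in unary whether [tower i <= |A|].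
   [DoubleA i], [DoubleB i _]: Alice tests [tower i <= lcp], Bob answers.
   [SearchA K lo s], [SearchB K lo s _]: with [lo <= lcp < lo + K ^ s.+1],
   Alice tests the [K - 1] candidates [lo + d * K ^ s], and Bob answers in
   unary how many pass, i.e. [(lcp - lo) %/ K ^ s]. *)
Inductive state :=
  Scan of nat | DoubleA of nat | DoubleB of nat & seq bool
| SearchA of nat & nat & nat | SearchB of nat & nat & nat & seq bool | Done of nat.

Definition next (x : state) : option (bool * nat) :=
  match x with
  | Scan _ => Some (false, 0)
  | DoubleA i => Some (false, fp_width (tower i))
  | DoubleB _ _ => Some (true, 0)
  | SearchA K _ _ => Some (false, (msgA_len K).-1)
  | SearchB K _ _ _ => Some (true, (msgB_len K).-1)
  | Done _ => None
  end.

Definition start_search i := SearchA (arity (tower i)) 0 depth.-1.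

Definition update (x : state) (m : seq bool) : state :=
  match x with
  | Scan i => if head false m then Scan i.+1 else start_search i
  | DoubleA i => DoubleB i m
  | DoubleB i _ => if head false m then DoubleA i.+1 else start_search i
  | SearchA K lo s => SearchB K lo s m
  | SearchB K lo s _ => let lo' := lo + count id m * K ^ s in
                        if s is s'.+1 then SearchA K lo' s' else Done lo'
  | Done l => Done l
  end.

Definition test_msg A r c u :=
  if u is j.+1 then (c <= size A) && fp r c j (take c A) else c <= size A.

(* Bob's check of Alice's [test_msg] for [c], found in [m] from offset [base]. *)
Definition test_ok B r c (m : seq bool) base T :=
  [&& nth false m base, c <= size B &
      all (fun j => nth false m (base + j.+1) == fp r c j (take c B)) (iota 0 T)].

Definition passing B r K lo s m :=
  count (fun d => test_ok B r (candidate K lo s d) m (d.-1 * (cand_width K).+1) (cand_width K))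
    (iota 1 K.-1).

Definition msgA A r (x : state) (o : nat) : bool :=
  match x with
  | Scan i => tower i <= size A
  | DoubleA i => test_msg A r (tower i) o
  | SearchA K lo s => test_msg A r (candidate K lo s (o %/ (cand_width K).+1).+1)
                        (o %% (cand_width K).+1)
  | _ => false
  end.

Definition msgB B r (x : state) (o : nat) : bool :=
  match x with
  | DoubleB i m => test_ok B r (tower i) m 0 (fp_width (tower i))
  | SearchB K lo s m => o < passing B r K lo s m
  | _ => false
  end.

Definition result (x : state) := if x is Done l then l else 0.

Definition lcp_protocol (s0 : state) := msg_protocol s0 next update msgA msgB result.

Local Notation runs A B r := (runs next update msgA msgB A B r).

Lemma test_ok_lcp A B r c m base T :
  fp_separates A B r -> fp_width c <= T ->
  (forall u, u <= T -> nth false m (base + u) = test_msg A r c u) ->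
  test_ok B r c m base T = (c <= lcp A B).
Proof.
move=> Hsep HT Hm.
have [HlA HlB] := (lcp_le_sizel A B, lcp_le_sizer A B).
rewrite /test_ok -[base]addn0 Hm // addn0 /=.
case hA: (c <= size A) => /=; last by apply/esym/negbTE; apply: contraFN hA => /(leq_trans)->.
case hB: (c <= size B) => /=; last by apply/esym/negbTE; apply: contraFN hB => /(leq_trans)->.
rewrite leq_lcp; last by rewrite leq_min hA hB.
rewrite (@eq_in_all _ _ (fun j => fp r c j (take c A) == fp r c j (take c B))); last first.
  by move=> j; rewrite mem_iota add0n => /andP[_ Hj]; rewrite Hm //= hA.
case: eqP => [->|Hne]; first by apply/allP => j _; rewrite eqxx.
apply/negbTE/allPn.
have Hc : c \in iota 1 (minn (size A) (size B)).
  rewrite mem_iota add1n ltnS leq_min hA hB /= andbT.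
  by case: (posnP c) Hne => // ->; rewrite !take0.
move: (allP Hsep c Hc); case: eqP => //= _ /hasP[j]; rewrite mem_iota add0n => /andP[_ Hj] Hneq.
by exists j; rewrite ?mem_iota ?add0n ?(leq_trans Hj HT) // /fp Hj.
Qed.

Lemma msgA_search_nth A r K lo s d u : 2 <= K -> 1 <= d <= K.-1 -> u <= cand_width K ->
  nth false (mkseq (msgA A r (SearchA K lo s)) (msgA_len K).-1.+1) (d.-1 * (cand_width K).+1 + u)
  = test_msg A r (candidate K lo s d) u.
Proof.
move=> HK /andP[Hd1 Hd2] Hu.
rewrite prednK; last by rewrite /msgA_len muln_gt0; lia.
have Hlt : d.-1 * (cand_width K).+1 + u < msgA_len K.
  apply: (@leq_trans (d.-1.+1 * (cand_width K).+1)); first by rewrite mulSn; lia.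
  by rewrite leq_mul2r prednK // Hd2 orbT.
rewrite nth_mkseq //= divnMDl // modnMDl divn_small ?ltnS // modn_small ?ltnS //.
by rewrite addn0 prednK.
Qed.

Lemma passing_lcp A B r K lo s : 2 <= K -> fp_separates A B r ->
  lo <= lcp A B < lo + K ^ s.+1 -> lo + K ^ s.+1 <= K ^ depth ->
  passing B r K lo s (mkseq (msgA A r (SearchA K lo s)) (msgA_len K).-1.+1)
  = (lcp A B - lo) %/ K ^ s.
Proof.
move=> HK Hsep /andP[H1 H2] H3.
have HKs : 0 < K ^ s by rewrite expn_gt0; lia.
have Hq : (lcp A B - lo) %/ K ^ s <= K.-1.
  by rewrite -ltnS prednK ?ltn_divLR -?expnS //; lia.
rewrite /passing -(minn_idPl Hq) -count_iota_leq.
apply/eq_in_count => d; rewrite mem_iota => Hd.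
have Hc : candidate K lo s d <= K ^ depth.
  apply: leq_trans H3; rewrite /candidate leq_add2l expnS leq_mul //; lia.
rewrite (@test_ok_lcp A) //; first by rewrite leq_divRL // /candidate; lia.
  exact: fp_width_le_cand_width.
by move=> u Hu; rewrite msgA_search_nth //; lia.
Qed.

Lemma passing_lt A B r K lo s : 2 <= K -> fp_separates A B r ->
  lo <= lcp A B < lo + K ^ s.+1 -> lo + K ^ s.+1 <= K ^ depth ->
  passing B r K lo s (mkseq (msgA A r (SearchA K lo s)) (msgA_len K).-1.+1) <= (msgB_len K).-1.+1.
Proof.
move=> HK Hsep Hl Hb; rewrite passing_lcp // /msgB_len prednK; last lia.
have HKs : 0 < K ^ s by rewrite expn_gt0; lia.
by rewrite -ltnS prednK ?ltn_divLR -?expnS //; lia.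
Qed.

Definition search_bits K s := s * ((msgA_len K).-1.+1 + (msgB_len K).-1.+1).
Definition search_speakers K s :=
  flatten (nseq s (nseq (msgA_len K).-1.+1 false ++ nseq (msgB_len K).-1.+1 true)).

Lemma search_bitsS K s :
  search_bits K s.+1 = (msgA_len K).-1.+1 + ((msgB_len K).-1.+1 + search_bits K s).
Proof. by rewrite /search_bits mulSn addnA. Qed.

Lemma search_speakersS K s : search_speakers K s.+1 =
  nseq (msgA_len K).-1.+1 false ++ (nseq (msgB_len K).-1.+1 true ++ search_speakers K s).
Proof. by rewrite /search_speakers catA. Qed.

Lemma search_run A B r K lo s : 2 <= K -> exists l,
  runs A B r (SearchA K lo s) (search_bits K s.+1) (search_speakers K s.+1) (Done l) /\
  (fp_separates A B r -> lo <= lcp A B < lo + K ^ s.+1 -> lo + K ^ s.+1 <= K ^ depth ->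
   l = lcp A B).
Proof.
move=> HK; elim: s lo => [|s IH] lo; rewrite search_bitsS search_speakersS.
  set m := mkseq (msgA A r (SearchA K lo 0)) (msgA_len K).-1.+1.
  set m' := mkseq (msgB B r (SearchB K lo 0 m)) (msgB_len K).-1.+1.
  exists (lo + count id m' * K ^ 0); split.
    by apply: runs_send => //; apply: runs_send => //; apply: runs_halt.
  move=> Hsep Hl Hb; rewrite /m' count_mkseq_ltn (minn_idPl (passing_lt _ _ _ _)) //.
  by rewrite passing_lcp // expn0 divn1 muln1; lia.
set m := mkseq (msgA A r (SearchA K lo s.+1)) (msgA_len K).-1.+1.
set m' := mkseq (msgB B r (SearchB K lo s.+1 m)) (msgB_len K).-1.+1.
have [l [Hr Hl']] := IH (lo + count id m' * K ^ s.+1); exists l; split.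
  by apply: runs_send => //; apply: runs_send.
move=> Hsep Hl Hb.
have HKs : 0 < K ^ s.+1 by rewrite expn_gt0; lia.
have Hcnt : count id m' = (lcp A B - lo) %/ K ^ s.+1.
  by rewrite /m' count_mkseq_ltn (minn_idPl (passing_lt _ _ _ _)) // passing_lcp.
rewrite expnS in Hl Hb; have [Hin Hup] := divn_refine HKs Hl.
by rewrite Hcnt in Hl'; apply: Hl' => //; apply: leq_trans Hb.
Qed.

Lemma start_search_run A B r i : exists l,
  runs A B r (start_search i) (search_bits (arity (tower i)) depth)
    (search_speakers (arity (tower i)) depth) (Done l) /\
  (fp_separates A B r -> lcp A B < tower i -> l = lcp A B).
Proof.
have [HK HL] := arityP (tower i).
have [l [Hr Hl]] := search_run A B r 0 depth.-1 HK.
by exists l; split=> // Hsep Hi; apply: Hl; rewrite // (_ : depth.-1.+1 = depth) //; lia.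
Qed.

Section Scan.
Variables (A B : seq Sigma) (r : nat -> bool).
Let I := tower_index (size A).
Let K := arity (tower I).

Lemma scan_run i : i <= I -> exists l,
  runs A B r (Scan i) ((I - i).+1 + search_bits K depth)
    (nseq (I - i).+1 false ++ search_speakers K depth) (Done l) /\
  (fp_separates A B r -> l = lcp A B).
Proof.
have [HI Hmin] := tower_indexP (size A).
move: {2}(I - i) (erefl (I - i)) => d; elim: d i => [|d IH] i Hd Hi.
  have -> : i = I by lia.
  rewrite subnn; have [l [Hr Hl]] := start_search_run A B r I.
  exists l; split.
    by apply: runs_send => //=; rewrite leqNgt HI.
  by move=> Hsep; apply: Hl => //; apply: leq_ltn_trans HI; apply: lcp_le_sizel.
have [l [Hr Hl]] := IH i.+1 ltac:(lia) ltac:(lia).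
exists l; split=> //; rewrite Hd; rewrite (_ : I - i.+1 = d) in Hr; last lia.
rewrite -[d.+2 + _]/(0.+1 + (d.+1 + _)).
rewrite -[nseq d.+2 false ++ _]/(nseq 1 false ++ (nseq d.+1 false ++ _)).
by apply: runs_send => //=; rewrite Hmin //; lia.
Qed.
End Scan.

Definition double_test A B r i := test_ok B r (tower i)
  (mkseq (msgA A r (DoubleA i)) (fp_width (tower i)).+1) 0 (fp_width (tower i)).

Lemma double_test_lcp A B r i : fp_separates A B r ->
  double_test A B r i = (tower i <= lcp A B).
Proof. by move=> Hsep; apply: test_ok_lcp => // u Hu; rewrite add0n nth_mkseq. Qed.

Lemma double_test_size A B r i : double_test A B r i -> tower i <= size B.
Proof. by case/and3P. Qed.

Lemma doubling_step A B r i bits sp f :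
  runs A B r (if double_test A B r i then DoubleA i.+1 else start_search i) bits sp f ->
  runs A B r (DoubleA i) ((fp_width (tower i)).+1 + (1 + bits))
    (nseq (fp_width (tower i)).+1 false ++ (nseq 1 true ++ sp)) f.
Proof. by move=> Hr; apply: runs_send => //; apply: runs_send. Qed.

Lemma doubling_halts A B r i : exists bits sp f, runs A B r (DoubleA i) bits sp f.
Proof.
move: {2}(size B - i) (leqnn (size B - i)) => n; elim: n i => [|n IH] i Hi.
all: suff [bits [sp [f Hr]]] : exists bits sp f,
    runs A B r (if double_test A B r i then DoubleA i.+1 else start_search i) bits sp f
  by do 3 eexists; apply: doubling_step Hr.
all: case: ifP => [/double_test_size HB|_];
  last by have [l [Hr _]] := start_search_run A B r i; do 3 eexists; exact: Hr.
(* A passing test needs [i < tower i <= |B|]. *)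
- by have := ltn_tower i; lia.
- by apply: IH; have := ltn_tower i; lia.
Qed.

Section Doubling.
Variables (A B : seq Sigma) (r : nat -> bool).
Hypothesis separates : fp_separates A B r.
Let I := tower_index (lcp A B).
Let K := arity (tower I).

Definition doubling_bits i := \sum_(i <= k < I.+1) (fp_width (tower k)).+2.
Definition doubling_speakers i :=
  flatten [seq nseq (fp_width (tower k)).+1 false ++ nseq 1 true | k <- iota i (I - i).+1].

Lemma doubling_bits_last : doubling_bits I = (fp_width (tower I)).+1 + 1.
Proof. by rewrite /doubling_bits big_nat1 addn1. Qed.

Lemma doubling_bitsS i : i < I ->
  doubling_bits i = (fp_width (tower i)).+1 + (1 + doubling_bits i.+1).
Proof. by move=> Hi; rewrite /doubling_bits big_ltn ?ltnS 1?ltnW // addnA addn1. Qed.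

Lemma doubling_speakers_last :
  doubling_speakers I = nseq (fp_width (tower I)).+1 false ++ (nseq 1 true ++ [::]).
Proof. by rewrite /doubling_speakers subnn catA. Qed.

Lemma doubling_speakersS i : i < I -> doubling_speakers i =
  nseq (fp_width (tower i)).+1 false ++ (nseq 1 true ++ doubling_speakers i.+1).
Proof.
by move=> Hi; rewrite /doubling_speakers catA (_ : I - i = (I - i.+1).+1) //; lia.
Qed.

Lemma doubling_run i : i <= I ->
  runs A B r (DoubleA i) (doubling_bits i + search_bits K depth)
    (doubling_speakers i ++ search_speakers K depth) (Done (lcp A B)).
Proof.
have [HI Hmin] := tower_indexP (lcp A B).
move: {2}(I - i) (erefl (I - i)) => d; elim: d i => [|d IH] i Hd Hi.
  have -> : i = I by lia.
  rewrite doubling_bits_last doubling_speakers_last -!catA -!addnA.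
  apply: doubling_step; rewrite double_test_lcp // leqNgt HI /=.
  by have [l [Hr /(_ separates HI) <-]] := start_search_run A B r I.
have HiI : i < I by lia.
rewrite doubling_bitsS // doubling_speakersS // -2!catA -2!addnA.
apply: doubling_step; rewrite double_test_lcp // Hmin //.
by apply: IH; lia.
Qed.
End Doubling.

Lemma test_msg_eq_coins A r r' c u :
  (forall i, i < fp_coins Sigma (size A) -> r i = r' i) -> test_msg A r c u = test_msg A r' c u.
Proof. by move=> H; case: u => [//|j] /=; case Hc: (c <= size A) => //=; apply: fp_eq_coins. Qed.

Lemma test_ok_eq_coins B r r' c m base T :
  (forall i, i < fp_coins Sigma (size B) -> r i = r' i) ->
  test_ok B r c m base T = test_ok B r' c m base T.
Proof.
move=> H; rewrite /test_ok; case: (nth false m base) => //=; case Hc: (c <= size B) => //=.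
by apply/eq_all => j; rewrite (@fp_eq_coins _ r r' c j B Hc H).
Qed.

Lemma lcp_protocol_eq_coins s0 A B r r' n :
  (forall i, i < fp_coins Sigma (size A + size B) -> r i = r' i) ->
  [/\ halts_at (lcp_protocol s0) A B r n <-> halts_at (lcp_protocol s0) A B r' n,
      rounds (lcp_protocol s0) A B r n = rounds (lcp_protocol s0) A B r' n &
      output (lcp_protocol s0) A B r n = output (lcp_protocol s0) A B r' n].
Proof.
move=> H.
have HA i : i < fp_coins Sigma (size A) -> r i = r' i.
  by move=> Hi; apply: H; apply: leq_trans Hi (fp_coins_leq _ (leq_addr _ _)).
have HB i : i < fp_coins Sigma (size B) -> r i = r' i.
  by move=> Hi; apply: H; apply: leq_trans Hi (fp_coins_leq _ (leq_addl _ _)).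
apply: msg_protocol_eq_coins => -[] //= *; rewrite ?(test_msg_eq_coins _ _ HA) //.
- by rewrite (test_ok_eq_coins _ _ _ _ HB).
- by rewrite /passing; congr (_ < _); apply: eq_count => d; rewrite (test_ok_eq_coins _ _ _ _ HB).
Qed.
End LcpProtocols.

Lemma fp_width_tower k : (fp_width (tower k)).+2 <= 4 * 3 ^ k + 7.
Proof.
have : tower k <= 2 ^ (2 * 3 ^ k) by rewrite /tower expnM leq_exp2r // expn_gt0.
by move/(leq_trunc_log 2); rewrite trunc_expnK /fp_width; lia.
Qed.

Lemma sum_fp_width_tower I : \sum_(0 <= k < I.+1) (fp_width (tower k)).+2 <= 18 * 3 ^ I.
Proof.
elim: I => [|I IH]; first by rewrite big_nat1; apply: leq_trans (fp_width_tower 0) _.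
by rewrite big_nat_recr //=; have := fp_width_tower I.+1; rewrite expnS; lia.
Qed.

Section ProtocolSpecs.
Variables (Sigma : finType) (dp : nat).
Local Notation depth := (depth dp).
Local Notation arity := (arity dp).
Local Notation lcp_protocol := (@lcp_protocol Sigma dp).

Definition search_arity m := arity (tower (tower_index m)).

Lemma exp3_le_arity_tower I : 3 ^ I <= arity (tower I) * depth.
Proof.
have [HK HL] := arityP dp (tower I).
have : arity (tower I) ^ depth <= 3 ^ (arity (tower I) * depth).
  by rewrite expnM leq_exp2r // ltnW // ltn_expl.
by move/(leq_trans HL); rewrite leq_exp2l.
Qed.

Lemma search_bits_le K : 2 <= K -> search_bits dp K depth <= 9 * (K * K) * (depth * depth).
Proof.
move=> HK; have HKd : 0 < K * depth by rewrite muln_gt0 andbT; lia.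
rewrite /search_bits /msgB_len (prednK (_ : 0 < K.-1)); last lia.
rewrite prednK /msgA_len /cand_width; last by rewrite muln_gt0 andbT; lia.
have : K.-1 * (2 * (K * depth) + 5).+1 + K.-1 <= K * (9 * (K * depth)).
  rewrite -(mulnSr _ (2 * (K * depth) + 5).+1); apply: leq_mul; lia.
by move/(leq_mul (leqnn depth))/leq_trans; apply; lia.
Qed.

Lemma leq_search_cost I a c : a <= c * 3 ^ I ->
  a + search_bits dp (arity (tower I)) depth <= (c + 9) * (depth * depth) * arity (tower I) ^ 2.
Proof.
move=> Ha; have [HK _] := arityP dp (tower I).
have := search_bits_le HK; have := exp3_le_arity_tower I; rewrite -mulnn.
move: (arity _) (3 ^ I) HK Ha => K x HK Ha h1 h2.
have h3 : K * depth <= (K * K) * (depth * depth) by rewrite leq_mul // leq_pmulr //; lia.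
have : c * x <= c * ((K * K) * (depth * depth)) by rewrite leq_mul2l (leq_trans h1 h3) orbT.
lia.
Qed.

Lemma nblocks_search_speakers K s : nblocks (search_speakers dp K s) <= 2 * s.
Proof.
rewrite /search_speakers; set blocks := (X in nseq s X).
rewrite -[in X in _ <= X](size_nseq s blocks).
by apply: nblocks_flatten_le2; rewrite all_nseq nblocks_nseq2 orbT.
Qed.

(* By minimality [(K - 1) ^ depth < tower I], and [tower I] is the cube of
   [tower I.-1 <= m]; for [I = 0] minimality even forces [K = 2]. *)
Lemma search_arity_cases m :
  search_arity m = 2 \/ 3 <= search_arity m /\ (search_arity m).-1 ^ depth <= m.+1 ^ 3.
Proof.
rewrite /search_arity; have [HK _] := arityP dp (tower (tower_index m)).
have [_ Hmin] := tower_indexP m.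
move: (@arity_min dp (tower (tower_index m))) HK; move: (arity _) => K Hmin3 HK /=.
case: (ltngtP K 2) => H; [lia | right | by left].
have Hm := Hmin3 H; split=> //.
case E: (tower_index m) Hm Hmin => [|I] Hm Hmin.
  have : 2 ^ depth <= K.-1 ^ depth by rewrite leq_exp2r //; lia.
  by rewrite (_ : tower 0 = 3) // /depth !expnS in Hm *; have := expn_gt0 2 dp; lia.
by apply: ltnW (leq_trans Hm _); rewrite towerS leq_exp2r // leqW // Hmin.
Qed.

Lemma scan_protocol_spec A B r : exists n,
  [/\ halts_at (lcp_protocol (Scan 0)) A B r n,
      n <= 10 * (depth * depth) * search_arity (size A) ^ 2,
      rounds (lcp_protocol (Scan 0)) A B r n <= 2 * depth + 1 &
      fp_separates A B r -> output (lcp_protocol (Scan 0)) A B r n = lcp A B].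
Proof.
have [l [Hr Hl]] := scan_run dp B r (leq0n (tower_index (size A))).
have [Hh Hrd Hout] := runs_msg_protocol (@result) Hr.
eexists; split; [exact: Hh | | rewrite Hrd | by rewrite Hout].
- by rewrite subn0; apply: (leq_search_cost (c := 1)); rewrite mul1n ltn_expl.
- apply: leq_trans (nblocks_cat _ _) _; rewrite addnC leq_add //.
  + exact: nblocks_search_speakers.
  + exact: nblocks_nseq.
Qed.

Lemma doubling_protocol_spec A B r : fp_separates A B r -> exists n,
  [/\ halts_at (lcp_protocol (DoubleA 0)) A B r n,
      output (lcp_protocol (DoubleA 0)) A B r n = lcp A B,
      n <= 27 * (depth * depth) * search_arity (lcp A B) ^ 2 &
      rounds (lcp_protocol (DoubleA 0)) A B r n <= 2 * tower_index (lcp A B) + (2 * depth + 2)].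
Proof.
move=> Hsep; have Hr := doubling_run dp Hsep (leq0n (tower_index (lcp A B))).
have [Hh Hrd Hout] := runs_msg_protocol (@result) Hr.
eexists; split; [exact: Hh | exact: Hout | | rewrite Hrd].
- exact: (leq_search_cost (c := 18) (sum_fp_width_tower _)).
- apply: leq_trans (nblocks_cat _ _) _.
  have := nblocks_search_speakers (arity (tower (tower_index (lcp A B)))) depth.
  have : nblocks (doubling_speakers A B 0) <= 2 * (tower_index (lcp A B)).+1.
    rewrite /doubling_speakers subn0; apply: leq_trans (nblocks_flatten_le2 _) _.
      by apply/allP => _ /mapP[k _ ->]; apply: nblocks_nseq2.
    by rewrite size_map size_iota.
  lia.
Qed.

Lemma doubling_protocol_halts A B r : exists n, halts_at (lcp_protocol (DoubleA 0)) A B r n.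
Proof.
have [bits [sp [f Hr]]] := doubling_halts dp A B r 0.
by have [Hh _ _] := runs_msg_protocol (@result) Hr; exists bits.
Qed.
End ProtocolSpecs.

Section RealBounds.
Local Open Scope R_scope.

Lemma leq_INR m n : (m <= n)%N -> INR m <= INR n.
Proof. by move/leP; apply: le_INR. Qed.

Lemma INR_muln m n : INR (m * n) = INR m * INR n.
Proof. by rewrite mulnE mult_INR. Qed.

Lemma INR_addn m n : INR (m + n) = INR m + INR n.
Proof. by rewrite addnE plus_INR. Qed.

Lemma INR_expn m n : INR (m ^ n) = INR m ^ n.
Proof. by rewrite expn_Natpow pow_INR. Qed.

Lemma ln_le x y : 0 < x -> x <= y -> ln x <= ln y.
Proof.
move=> Hx Hxy; case: (Rle_lt_or_eq_dec _ _ Hxy) => [H|->]; last exact: Rle_refl.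
exact/Rlt_le/ln_increasing.
Qed.

Lemma exp_le x y : x <= y -> exp x <= exp y.
Proof.
move=> Hxy; case: (Rle_lt_or_eq_dec _ _ Hxy) => [H|->]; last exact: Rle_refl.
exact/Rlt_le/exp_increasing.
Qed.

Lemma ln_ge0 x : 1 <= x -> 0 <= ln x.
Proof. by move=> H; rewrite -ln_1; apply: ln_le; lra. Qed.

Lemma Rpower_ge1 y e : 1 <= y -> 0 <= e -> 1 <= Rpower y e.
Proof. move=> Hy He; rewrite /Rpower -exp_0; apply: exp_le; have := ln_ge0 Hy; nra. Qed.

Lemma INR3 : INR 3 = 3.
Proof. by rewrite /=; lra. Qed.

Lemma ln3_ge1 : 1 <= ln 3.
Proof. by rewrite -[1]ln_exp; apply: ln_le; [apply: exp_pos | apply: exp_le_3]. Qed.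

Lemma sq_le_Rpower (a b h : nat) eps : 0 < eps -> 6 <= INR h * eps -> (0 < h)%N ->
  (1 <= a)%N -> (1 <= b)%N -> (a ^ h <= b ^ 3)%N -> INR (a * a) <= Rpower (INR b) eps.
Proof.
move=> He Hh Hh0 /leq_INR Ha /leq_INR Hb /leq_INR Hab.
have Hh' : 0 < INR h by apply: lt_0_INR; apply/ltP.
rewrite !INR_expn /= in Ha Hb Hab.
have Hln : ln (INR a ^ h) <= ln (INR b ^ 3) by apply: ln_le => //; apply: pow_lt; lra.
rewrite !ln_pow ?INR3 in Hln; try lra.
have Hla := ln_ge0 Ha; have Hlb := ln_ge0 Hb.
have H2 : 2 * ln (INR a) <= eps * ln (INR b) by nra.
rewrite INR_muln /Rpower -[_ * _]exp_ln; last by nra.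
by apply: exp_le; rewrite ln_mult; lra.
Qed.

Lemma lglg_ge0 l : 0 <= ln (1 + ln (1 + INR l)).
Proof.
have := pos_INR l => Hl; have : 0 <= ln (1 + INR l) by apply: ln_ge0; lra.
by move=> Hl1; apply: ln_ge0; lra.
Qed.

Lemma tower_index_le_lglg l : INR (tower_index l) <= 1 + ln (1 + ln (1 + INR l)).
Proof.
have Hl0 := pos_INR l; have Hlglg := lglg_ge0 l.
have [_ Hmin] := tower_indexP l.
case: (tower_index l) Hmin => [|I] Hmin; first by rewrite /=; lra.
have /leq_INR := Hmin I (ltnSn I); rewrite /tower INR_expn INR3 => HI.
have E1 : INR (3 ^ I) <= ln (1 + INR l).
  apply: Rle_trans (_ : INR (3 ^ I) * ln 3 <= _).
    by have := ln3_ge1; have := pos_INR (3 ^ I); nra.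
  by rewrite -ln_pow; [apply: ln_le; [apply: pow_lt|]|]; lra.
have E2 : INR I <= ln (1 + ln (1 + INR l)).
  apply: Rle_trans (_ : ln (INR (3 ^ I)) <= _); last first.
    by apply: ln_le; [apply: lt_0_INR; apply/ltP; rewrite expn_gt0 | lra].
  rewrite INR_expn ln_pow INR3; last lra.
  by have := ln3_ge1; have := pos_INR I; nra.
by rewrite S_INR; lra.
Qed.

Lemma search_arity_sq_le dp eps m : 0 < eps -> 6 <= INR (depth dp) * eps ->
  INR (search_arity dp m ^ 2) <= 4 * Rpower (INR m + 1) eps.
Proof.
move=> He Hdp.
have Hp : 1 <= Rpower (INR m + 1) eps by apply: Rpower_ge1; have := pos_INR m; lra.
case: (search_arity_cases dp m) => [-> | ]; first by rewrite INR_expn /=; nra.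
move: (search_arity dp m) => K [HK HKm].
have /leq_INR : (K ^ 2 <= 4 * (K.-1 * K.-1))%N by rewrite -mulnn; nia.
rewrite INR_muln (_ : INR 4 = 4) => [HK4|]; last by rewrite /=; lra.
have := sq_le_Rpower He Hdp (isT : (0 < depth dp)%N) (_ : 1 <= K.-1)%N (_ : 1 <= m.+1)%N HKm.
by rewrite S_INR => /(_ ltac:(lia) isT) HKR; nra.
Qed.

Lemma pow_bound_le c c' eps m x : c <= c' -> pow_bound c eps m x -> pow_bound c' eps m x.
Proof.
rewrite /pow_bound => Hc Hx; apply: Rle_trans Hx _.
by apply: Rmult_le_compat_r => //; apply/Rlt_le/exp_pos.
Qed.

Lemma lglg_bound_le c c' l x : c <= c' -> lglg_bound c l x -> lglg_bound c' l x.
Proof.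
rewrite /lglg_bound => Hc Hx; apply: Rle_trans Hx _; apply: Rmult_le_compat_r => //.
have := lglg_ge0 l; lra.
Qed.

Lemma pow_bound_search dp eps m a x : 0 < eps -> 6 <= INR (depth dp) * eps ->
  (x <= a * search_arity dp m ^ 2)%N -> pow_bound (INR a * 4) eps m x.
Proof.
move=> He Hdp /leq_INR Hx; apply: Rle_trans Hx _; rewrite INR_muln Rmult_assoc.
by apply: Rmult_le_compat_l; [apply: pos_INR | apply: search_arity_sq_le].
Qed.

Lemma lglg_bound_rounds b l x : (x <= 2 * tower_index l + b)%N -> lglg_bound (INR b + 2) l x.
Proof.
move=> /leq_INR; rewrite /lglg_bound INR_addn INR_muln (_ : INR 2 = 2) => [Hx|]; last first.
  by rewrite /=; lra.
have := tower_index_le_lglg l; have := pos_INR b; have := lglg_ge0 l.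
nra.
Qed.

Lemma exists_depth eps : 0 < eps -> exists dp, 6 <= INR (depth dp) * eps.
Proof.
move=> He; have [dp Hdp] := INR_archimed eps 6 He; exists dp.
have : INR dp <= INR (depth dp) by apply: leq_INR; rewrite /depth; lia.
nra.
Qed.
End RealBounds.

Lemma lcp_protocol_const_rounds (Sigma : finType) (eps : R) : Rlt 0 eps ->
  exists (c : R) (k : nat) (P : protocol Sigma), forall A B : seq Sigma,
    (forall r, exists n, halts_at P A B r n /\
       pow_bound c eps (size A) n /\ (rounds P A B r n <= k)%N) /\
    prob_ge_2_3 (fun r => forall n, halts_at P A B r n -> output P A B r n = lcp A B).
Proof.
move=> He; have [dp Hdp] := exists_depth He.
exists (Rmult (INR (10 * (depth dp * depth dp))) 4), (2 * depth dp + 1),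
  (lcp_protocol Sigma dp (Scan 0)) => A B; split.
  move=> r; have [n [Hh Hn Hr _]] := scan_protocol_spec dp A B r.
  by exists n; split=> //; split=> //; apply: pow_bound_search Hn.
apply: (prob_fp_separates (A := A) (B := B)) => [r r' Hrr' H n|r Hsep n Hh].
  by have [E1 _ <-] := lcp_protocol_eq_coins dp (Scan 0) n Hrr'; move/E1/H.
have [n' [Hh' _ _ Hout]] := scan_protocol_spec dp A B r.
by rewrite (halts_at_unique Hh Hh'); apply: Hout.
Qed.

Lemma lcp_protocol_lglg_rounds (Sigma : finType) (eps : R) : Rlt 0 eps ->
  exists (c : R) (P : protocol Sigma), forall A B : seq Sigma,
    (forall r, exists n, halts_at P A B r n) /\
    prob_ge_2_3 (fun r => exists n, halts_at P A B r n /\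
       output P A B r n = lcp A B /\
       pow_bound c eps (lcp A B) n /\
       lglg_bound c (lcp A B) (rounds P A B r n)).
Proof.
move=> He; have [dp Hdp] := exists_depth He.
have Ha := pos_INR (27 * (depth dp * depth dp)); have Hb := pos_INR (2 * depth dp + 2).
exists (Rplus (Rmult (INR (27 * (depth dp * depth dp))) 4) (Rplus (INR (2 * depth dp + 2)) 2)),
  (lcp_protocol Sigma dp (DoubleA 0)) => A B; split.
  exact: doubling_protocol_halts.
apply: (prob_fp_separates (A := A) (B := B)) => [r r' Hrr' [n [Hh H]]|r Hsep].
  have [E1 E2 E3] := lcp_protocol_eq_coins dp (DoubleA 0) n Hrr'.
  by exists n; rewrite -E2 -E3; split=> //; apply/E1.
have [n [Hh Hout Hn Hr]] := doubling_protocol_spec dp Hsep.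
exists n; do !split=> //.
  by apply: (pow_bound_le _ (pow_bound_search He Hdp Hn)); lra.
by apply: (lglg_bound_le _ (lglg_bound_rounds Hr)); lra.
Qed.

Theorem lemma13 (Sigma : finType) (eps : R) : Rlt 0 eps ->
  (* (1) O(1) rounds and O(|A|^eps) communication *)
  (exists (c : R) (k : nat) (P : protocol Sigma), forall A B : seq Sigma,
     (forall r, exists n, halts_at P A B r n /\
        pow_bound c eps (size A) n /\ (rounds P A B r n <= k)%N) /\
     prob_ge_2_3 (fun r => forall n, halts_at P A B r n ->
                                     output P A B r n = lcp A B))
  /\
  (* (2) O(lg lg l) rounds and O(l^eps) communication, l = LCP(A,B) *)
  (exists (c : R) (P : protocol Sigma), forall A B : seq Sigma,
     (forall r, exists n, halts_at P A B r n) /\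
     prob_ge_2_3 (fun r => exists n, halts_at P A B r n /\
        output P A B r n = lcp A B /\
        pow_bound c eps (lcp A B) n /\
        lglg_bound c (lcp A B) (rounds P A B r n))).
Proof.
move=> He; split; [exact: lcp_protocol_const_rounds | exact: lcp_protocol_lglg_rounds].
Qed.
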